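(* Let $k\ge 2$ and let $\mathbf{x}_1,\ldots,\mathbf{x}_k$ be norm one vectors in a real Hilbert space $\mathcal H$ with $\dim(\operatorname{span}\{\mathbf{x}_1,\ldots,\mathbf{x}_k\})=2$. If $S,T\in\mathcal L_s(^k\mathcal H)$ have norm one and $S(\mathbf{x}_1,\ldots,\mathbf{x}_k)=T(\mathbf{x}_1,\ldots,\mathbf{x}_k)=1$, then, setting $\mathcal H_1=\operatorname{span}\{\mathbf{x}_1,\ldots,\mathbf{x}_k\}$, the restrictions of $S$ and $T$ to $\mathcal H_1\times\cdots\times\mathcal H_1$ coincide.
   Context: $\mathcal L_s(^k\mathcal H)$ is the Banach space of continuous symmetric real-valued $k$-linear forms on $\mathcal H$ with norm $\|T\|=\sup\{|T(\mathbf{w}_1,\ldots,\mathbf{w}_k)|:\|\mathbf{w}_i\|\le1\}$. *)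

From HB Require Import structures.
From mathcomp Require Import all_boot all_order all_algebra all_fingroup.
From mathcomp Require Import all_classical all_reals all_analysis.
Set Implicit Arguments. Unset Strict Implicit. Unset Printing Implicit Defensive.
Import Order.TTheory GRing.Theory Num.Theory.
Import numFieldNormedType.Exports.
Local Open Scope classical_set_scope.
Local Open Scope ring_scope.

(* A real Hilbert space is a complete normed space H over R together with an
   inner product ip (symmetric, bilinear, positive definite) inducing the norm. *)
Definition is_inner_product (R : realType) (H : normedModType R)
  (ip : H -> H -> R) : Prop :=
  [/\ (forall x y, ip x y = ip y x),
      (forall a x y z, ip (a *: x + y) z = a * ip x z + ip y z),
      (forall x, ip x x = `|x| ^+ 2) &
      (forall x, ip x x = 0 -> x = 0)].

Definition span_fam (R : realType) (H : normedModType R) (k : nat)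
  (x : 'I_k -> H) : set H :=
  [set v | exists c : 'I_k -> R, v = \sum_(i < k) c i *: x i].

Definition dim_eq2 (R : realType) (H : normedModType R) (V : set H) : Prop :=
  exists u v : H,
    (forall a b : R, a *: u + b *: v = 0 -> a = 0 /\ b = 0) /\
    V = [set w | exists a b : R, w = a *: u + b *: v].

Definition upd (H : Type) (k : nat) (w : 'I_k -> H) (i : 'I_k) (u : H) :
  'I_k -> H := fun j => if j == i then u else w j.

Definition multilinear (R : realType) (H : normedModType R) (k : nat)
  (T : ('I_k -> H) -> R) : Prop :=
  forall (w : 'I_k -> H) (i : 'I_k) (a : R) (u v : H),
    T (upd w i (a *: u + v)) = a * T (upd w i u) + T (upd w i v).

Definition symmetric_form (R : realType) (H : normedModType R) (k : nat)
  (T : ('I_k -> H) -> R) : Prop :=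
  forall (s : 'S_k) (w : 'I_k -> H), T (fun j => w (s j)) = T w.

(* continuity of a k-linear form, in its standard bounded form *)
Definition bounded_form (R : realType) (H : normedModType R) (k : nat)
  (T : ('I_k -> H) -> R) : Prop :=
  exists C : R, forall w : 'I_k -> H, `|T w| <= C * \prod_(i < k) `|w i|.

Definition Ls (R : realType) (H : normedModType R) (k : nat)
  (T : ('I_k -> H) -> R) : Prop :=
  [/\ multilinear T, symmetric_form T & bounded_form T].

Definition form_norm (R : realType) (H : normedModType R) (k : nat)
  (T : ('I_k -> H) -> R) : R :=
  sup [set `|T w| | w in [set w : 'I_k -> H | forall i, `|w i| <= 1]].

From Pilot Require Import Defs.
From HB Require Import structures.
From mathcomp Require Import all_boot all_order all_algebra all_fingroup.
From mathcomp Require Import all_classical all_reals all_analysis.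
From mathcomp Require Import ring lra.
Import Order.TTheory GRing.Theory Num.Theory.
Import numFieldNormedType.Exports.
Local Open Scope classical_set_scope.
Local Open Scope ring_scope.

(* Choose an orthonormal basis e, f of the plane H1 and put
   cis t := cos t e + sin t f.  If S (cis th_1, ..., cis th_k) = 1 and ||S|| = 1,
   the first-order condition at this maximum forces v |-> S(.., v, ..) (v in
   slot a) to be the inner product with cis th_a.  Consequently, rotating two
   non-parallel slots by +s and -s keeps the value 1.  As the x_i span a plane,
   some pair of slots is non-parallel, and chaining such rotations reaches every
   angle vector with the same angle sum sigma.  Changing one more slot gives
   S (cis phi_1, ..., cis phi_k) = cos (sum phi - sigma) for every phi, a formula
   that does not depend on S; multilinearity then extends it to all of H1. *)

Section Update.
Context {T : Type} {k : nat}.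
Implicit Types (w : 'I_k -> T) (i j : 'I_k) (u v : T).

Lemma upd_at w i u : upd w i u i = u.
Proof. by rewrite /upd eqxx. Qed.

Lemma upd_other w i u j : j != i -> upd w i u j = w j.
Proof. by rewrite /upd => /negbTE ->. Qed.

Lemma upd_id w i u : w i = u -> upd w i u = w.
Proof. by move=> <-; apply: funext => j; rewrite /upd; case: eqP => // ->. Qed.

Lemma upd_comm w i j u v : i != j -> upd (upd w i u) j v = upd (upd w j v) i u.
Proof.
move=> ij; apply: funext => l; rewrite /upd.
by have [-> | //] := eqVneq l j; rewrite eq_sym (negbTE ij).
Qed.

Lemma comp_upd (U : Type) (f : T -> U) w i u :
  f \o upd w i u = upd (f \o w) i (f u).
Proof. by apply: funext => j; rewrite /upd /=; case: eqP. Qed.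

End Update.

Lemma sum_upd {R : nmodType} {k : nat} (th : 'I_k -> R) a t :
  \sum_i upd th a t i + th a = \sum_i th i + t.
Proof.
rewrite (bigD1 a) //= [in RHS](bigD1 a) //= upd_at.
rewrite (eq_bigr th) => [|i ia]; last by rewrite upd_other.
by rewrite [LHS]addrC [t + _]addrC addrA.
Qed.

Section Multilinear.
Context {R : realType} {H : normedModType R} {k : nat} {S : ('I_k -> H) -> R}.
Hypothesis mS : multilinear S.

Lemma multilinear0 w i : S (upd w i 0) = 0.
Proof. by have := mS w i (-1) 0 0; rewrite scaler0 addr0 mulN1r addNr. Qed.

Lemma multilinearZ w i a u : S (upd w i (a *: u)) = a * S (upd w i u).
Proof. by have := mS w i a u 0; rewrite addr0 multilinear0 addr0. Qed.

Lemma multilinearD w i u v : S (upd w i (u + v)) = S (upd w i u) + S (upd w i v).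
Proof. by have := mS w i 1 u v; rewrite scale1r mul1r. Qed.

Lemma multilinear_scale (r : 'I_k -> R) (u : 'I_k -> H) :
  S (fun i => r i *: u i) = \prod_i r i * S u.
Proof.
suff scale_on s : uniq s ->
    S (fun i => if i \in s then r i *: u i else u i) = \prod_(i <- s) r i * S u.
  rewrite -big_enum /=; have := scale_on _ (enum_uniq 'I_k).
  by under eq_fun do rewrite mem_enum.
elim: s => [|j s IHs] /=; first by rewrite big_nil mul1r.
case/andP=> js us; rewrite big_cons -mulrA -IHs //.
set w := fun i => if i \in s then _ else _.
have -> : (fun i => if i \in j :: s then r i *: u i else u i) = upd w j (r j *: u j).
  by apply: funext => i; rewrite /upd inE; case: eqP => [->|].
rewrite multilinearZ; congr (_ * S _).
by rewrite upd_id // /w (negbTE js).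
Qed.

End Multilinear.

Definition unit_bounded {R : realType} {H : normedModType R} {k : nat}
  (S : ('I_k -> H) -> R) : Prop :=
  forall w : 'I_k -> H, (forall i, `|w i| <= 1) -> `|S w| <= 1.

Lemma form_norm1_unit_bounded {R : realType} {H : normedModType R} {k : nat}
  {S : ('I_k -> H) -> R} : Ls S -> form_norm S = 1 -> unit_bounded S.
Proof.
case=> _ _ [C hC] nS w hw; rewrite -nS; apply: ub_le_sup; last by exists w.
exists (Num.max C 0) => _ [v hv <-]; apply: le_trans (hC v) _.
have prod_ge0 : 0 <= \prod_(i < k) `|v i| by apply: prodr_ge0.
have prod_le1 : \prod_(i < k) `|v i| <= 1 by apply: prodr_ile1 => i _; rewrite normr_ge0 hv.
have [C_le0 | C_gt0] := lerP C 0; first by rewrite mulr_le0_ge0.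
by rewrite -[leRHS]mulr1 ler_wpM2l // ltW.
Qed.

Lemma unit_bounded_upd {R : realType} {H : normedModType R} {k : nat}
  {S : ('I_k -> H) -> R} {y : 'I_k -> H} : multilinear S -> unit_bounded S ->
  (forall i, `|y i| <= 1) -> forall a v, `|S (upd y a v)| <= `|v|.
Proof.
move=> mS bS hy a v; have [->|v0] := eqVneq v 0.
  by rewrite (multilinear0 mS) !normr0.
have nv : `|v| != 0 by rewrite normr_eq0.
rewrite -{1}(scalerKV nv v) (multilinearZ mS) normrM normr_id ler_piMr //.
apply: bS => j; rewrite /upd; case: eqP => _ //.
by rewrite normrZ normrV ?unitfE // normr_id mulVf.
Qed.

Definition orthonormal_pair {R : realType} {H : normedModType R} (ip : H -> H -> R)
  (e f : H) : Prop := [/\ ip e e = 1, ip f f = 1 & ip e f = 0].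

Section InnerProduct.
Context {R : realType} {H : normedModType R} {ip : H -> H -> R}.
Hypothesis hip : is_inner_product ip.

Lemma ipC x y : ip x y = ip y x.
Proof. by case: hip. Qed.

Lemma ip_norm x : ip x x = `|x| ^+ 2.
Proof. by case: hip. Qed.

Lemma ip0l z : ip 0 z = 0.
Proof.
case: hip => _ lin _ _; have := lin (-1) 0 0 z.
by rewrite scaler0 addr0 mulN1r addNr.
Qed.

Lemma ipZl a x z : ip (a *: x) z = a * ip x z.
Proof. by case: hip => _ lin _ _; rewrite -[a *: x]addr0 lin ip0l addr0. Qed.

Lemma ipDl x y z : ip (x + y) z = ip x z + ip y z.
Proof. by case: hip => _ lin _ _; have := lin 1 x y z; rewrite scale1r mul1r. Qed.

Lemma ipZr a x z : ip z (a *: x) = a * ip z x.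
Proof. by rewrite ipC ipZl ipC. Qed.

Lemma ipDr x y z : ip z (x + y) = ip z x + ip z y.
Proof. by rewrite ipC ipDl !(ipC z). Qed.

Lemma ip_unit z : z != 0 -> ip (`|z|^-1 *: z) (`|z|^-1 *: z) = 1.
Proof.
move=> z0; have nz : `|z| != 0 by rewrite normr_eq0.
by rewrite ipZl ipZr ip_norm; field.
Qed.

Lemma gram_schmidt2 {u v : H} : (forall a b : R, a *: u + b *: v = 0 -> a = 0 /\ b = 0) ->
  exists e f, orthonormal_pair ip e f /\
    forall a b : R, exists c d : R, a *: u + b *: v = c *: e + d *: f.
Proof.
move=> indep; have u0 : u != 0.
  apply/eqP => u0; have [] := indep 1 0; last by move=> /eqP; rewrite oner_eq0.
  by rewrite u0 scaler0 scale0r addr0.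
set e := `|u|^-1 *: u; set g := v - ip e v *: e.
have g0 : g != 0.
  apply/eqP => g0; have [] := indep (- (ip e v / `|u|)) 1.
    by rewrite scale1r scaleNr -scalerA addrC -g0.
  by move=> _ /eqP; rewrite oner_eq0.
set f := `|g|^-1 *: g.
have ee : ip e e = 1 by exact: ip_unit.
exists e, f; split.
  split => //; first exact: ip_unit.
  by rewrite ipZr ipDr -scaleNr ipZr ee; ring.
have nu : `|u| != 0 by rewrite normr_eq0.
have ng : `|g| != 0 by rewrite normr_eq0.
move=> a b; exists (a * `|u| + b * ip e v), (b * `|g|).
rewrite -{1}(scalerKV nu u) -/e -{1}(subrK (ip e v *: e) v) -/g.
rewrite -{1}(scalerKV ng g) -/f.
by rewrite scalerDr !scalerA mulrDl scalerDl [RHS]addrAC addrA.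
Qed.

End InnerProduct.

Lemma polar_coords {R : realType} (a b : R) :
  exists r t, 0 <= r /\ a = r * cos t /\ b = r * sin t.
Proof.
set r := Num.sqrt (a ^+ 2 + b ^+ 2).
have r2 : r ^+ 2 = a ^+ 2 + b ^+ 2 by rewrite sqr_sqrtr // addr_ge0 ?sqr_ge0.
have [r0 | r_neq0] := eqVneq r 0.
  move/esym/eqP: r2; rewrite r0 expr0n /= paddr_eq0 ?sqr_ge0 // !sqrf_eq0 => /andP[/eqP -> /eqP ->].
  by exists 0, 0; rewrite !mul0r.
have r_gt0 : 0 < r by rewrite lt_def r_neq0 sqrtr_ge0.
have r_ge0 := ltW r_gt0.
have a_r : -1 <= a / r <= 1.
  rewrite ler_pdivrMr // ler_pdivlMr // mul1r mulN1r.
  apply/andP; split; nra.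
set t := acos (a / r).
have cos_t : cos t = a / r by rewrite acosK // in_itv.
have sin_t : sin t = `|b| / r.
  rewrite sin_acos //; have -> : 1 - (a / r) ^+ 2 = (`|b| / r) ^+ 2.
    rewrite !expr_div_n real_normK ?num_real //.
    have -> : b ^+ 2 = r ^+ 2 - a ^+ 2 by rewrite r2; ring.
    by field.
  by rewrite sqrtr_sqr ger0_norm // divr_ge0.
have [b_ge0 | b_lt0] := lerP 0 b.
  by exists r, t; rewrite cos_t sin_t ger0_norm // !(mulrCA r) mulfV // !mulr1.
exists r, (- t); rewrite cosN sinN cos_t sin_t ltr0_norm // mulrN.
by rewrite !(mulrCA r) mulfV // !mulr1 opprK.
Qed.

Lemma dim_eq2_not_line {R : realType} {H : normedModType R} {V : set H} (z : H) :
  dim_eq2 V -> ~ (forall w, V w -> exists c : R, w = c *: z).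
Proof.
move=> [u [v [indep ->]]] line.
have [cu eu] : exists c : R, u = c *: z.
  by apply: line; exists 1, 0; rewrite scale1r scale0r addr0.
have [cv ev] : exists c : R, v = c *: z.
  by apply: line; exists 0, 1; rewrite scale1r scale0r add0r.
have [cv0 cu0] : cv = 0 /\ - cu = 0.
  by apply: indep; rewrite eu ev !scalerA mulNr scaleNr mulrC subrr.
have [] := indep 1 0; last by move=> /eqP; rewrite oner_eq0.
by rewrite scale1r scale0r addr0 eu -[cu]opprK cu0 oppr0 scale0r.
Qed.

Lemma quadratic_le0_lin_eq0 {R : realFieldType} (d q : R) :
  (forall t, t * d + t ^+ 2 * q <= 0) -> d = 0.
Proof.
move=> le0; set M := 1 + `|q|.
have M_gt0 : 0 < M by rewrite ltr_pwDl ?normr_ge0.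
have Mq_ge1 : 1 <= M + q by have := ler_norm (- q); rewrite normrN /M; lra.
set t := d / M; have d_tM : d = t * M by rewrite divfK ?gt_eqF.
have := le0 t; rewrite d_tM => h.
suff -> : t = 0 by rewrite mul0r.
by apply/eqP; rewrite -sqrf_eq0 eq_le sqr_ge0 andbT; nra.
Qed.

Definition cis {R : realType} {H : normedModType R} (e f : H) (t : R) : H :=
  cos t *: e + sin t *: f.

Section Circle.
Context {R : realType} {H : normedModType R} {e f : H}.
Local Notation cis := (cis e f).

Lemma comb_polar a b : exists r t, 0 <= r /\ a *: e + b *: f = r *: cis t.
Proof.
have [r [t [r_ge0 [-> ->]]]] := polar_coords a b.
by exists r, t; rewrite /cis scalerDr !scalerA.
Qed.

Lemma cis_sine_rule A D s :
  sin D *: cis (A + s) = sin (D - s) *: cis A + sin s *: cis (A + D).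
Proof.
rewrite /cis !scalerDr !scalerA addrACA -!scalerDl.
by congr (_ *: e + _ *: f); rewrite sinB ?sinD ?cosD; ring.
Qed.

Lemma cis_parallel A D : sin D = 0 -> cis (A + D) = cos D *: cis A.
Proof.
move=> sinD0; rewrite /cis scalerDr !scalerA.
by congr (_ *: e + _ *: f); rewrite ?sinD ?cosD sinD0; ring.
Qed.

Lemma cis_interp A D s : sin D != 0 ->
  cis (A + s) = (sin (D - s) / sin D) *: cis A + (sin s / sin D) *: cis (A + D).
Proof.
move=> D0; apply: (scalerI D0).
by rewrite cis_sine_rule [RHS]scalerDr !scalerA ![sin D * _]mulrC !divfK.
Qed.

Context {ip : H -> H -> R}.
Hypotheses (hip : is_inner_product ip) (hef : orthonormal_pair ip e f).

Lemma ip_comb a b c d : ip (a *: e + b *: f) (c *: e + d *: f) = a * c + b * d.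
Proof.
case: hef => ee ff ef.
by rewrite (ipDl hip) !(ipDr hip) !(ipZl hip) !(ipZr hip) ee ff ef (ipC hip f) ef; ring.
Qed.

Lemma ip_cis A B : ip (cis A) (cis B) = cos (A - B).
Proof. by rewrite ip_comb cosB. Qed.

Lemma norm_cis t : `|cis t| = 1.
Proof.
by apply/eqP; rewrite -(sqrp_eq1 (normr_ge0 _)) -(ip_norm hip) ip_cis subrr cos0.
Qed.

End Circle.

Lemma sinMsin {R : realType} (x y : R) : 2 * (sin x * sin y) = cos (x - y) - cos (x + y).
Proof. by rewrite cosB cosD; ring. Qed.

Lemma exists_sin2_neq0 {R : realType} (d1 d2 : R) :
  exists v, sin (d1 + v) != 0 /\ sin (d2 + v) != 0.
Proof.
(* Otherwise 2 sin (d1 + v) sin (d2 + v) = cos (d1 - d2) - cos (d1 + d2 + 2 v)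
   vanishes for all v, which fails at d1 + d2 + 2 v = 0 or pi. *)
apply: contrapT => none.
have cos_const v : cos (d1 - d2) = cos (d1 + d2 + 2 * v).
  have prod0 : sin (d1 + v) * sin (d2 + v) = 0.
    by apply/eqP; rewrite mulf_eq0; apply/negPn/negP => /norP[h1 h2]; apply: none; exists v.
  have := sinMsin (d1 + v) (d2 + v); rewrite prod0 mulr0.
  have -> : d1 + v - (d2 + v) = d1 - d2 by ring.
  have -> : d1 + v + (d2 + v) = d1 + d2 + 2 * v by ring.
  by move/eqP; rewrite eq_sym subr_eq0 => /eqP.
have := cos_const (- (d1 + d2) / 2); have := cos_const (pi / 2 - (d1 + d2) / 2).
have -> : d1 + d2 + 2 * (- (d1 + d2) / 2) = 0 by field.
have -> : d1 + d2 + 2 * (pi / 2 - (d1 + d2) / 2) = pi by field.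
rewrite cos0 cospi; lra.
Qed.

Section NormingPoint.
Context {R : realType} {H : normedModType R} {ip : H -> H -> R} {k : nat}.
Context {S : ('I_k -> H) -> R} {y : 'I_k -> H}.
Hypotheses (hip : is_inner_product ip) (mS : multilinear S) (bS : unit_bounded S).
Hypotheses (y_unit : forall i, `|y i| = 1) (Sy : S y = 1).

Lemma norming_upd a v : S (upd y a v) = ip (y a) v.
Proof.
(* |S (upd y a (y a + t v))| = |1 + t F| is at most |y a + t v| for all t, with
   equality at t = 0, so the first-order terms in t agree. *)
set F := S (upd y a v); set c := ip (y a) v.
suff /eqP : 2 * (F - c) = 0 by rewrite mulf_eq0 pnatr_eq0 subr_eq0 => /eqP.
apply: (@quadratic_le0_lin_eq0 _ _ (F ^+ 2 - `|v| ^+ 2)) => t.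
have y_le1 i : `|y i| <= 1 by rewrite y_unit.
have := unit_bounded_upd mS bS y_le1 a (y a + t *: v).
rewrite (multilinearD mS) upd_id // Sy (multilinearZ mS) -/F => bound.
have norm2 : `|y a + t *: v| ^+ 2 = 1 + 2 * t * c + t ^+ 2 * `|v| ^+ 2.
  rewrite -(ip_norm hip) (ipDl hip) !(ipDr hip) !(ipZl hip) !(ipZr hip).
  by rewrite !(ip_norm hip) y_unit (ipC hip v) -/c; ring.
have : (1 + t * F) ^+ 2 <= `|y a + t *: v| ^+ 2.
  rewrite -(real_normK (num_real (1 + t * F))).
  by rewrite lerXn2r ?nnegrE.
rewrite norm2; nra.
Qed.

Hypothesis sS : Defs.symmetric_form S.

Lemma norming_upd2 a b al be : a != b ->
  S (upd (upd y a (al *: y a + be *: y b)) b (al *: y b + be *: y a)) =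
  `|al *: y a + be *: y b| ^+ 2.
Proof.
move=> ab; set w := al *: y a + be *: y b.
have upd_swap : upd (upd y b (y a)) a (y b) = (fun j => y (tperm a b j)).
  apply: funext => j; rewrite /upd.
  have [-> | ja] := eqVneq j a; first by rewrite tpermL.
  have [-> | jb] := eqVneq j b; first by rewrite tpermR.
  by rewrite tpermD // eq_sym.
rewrite (multilinearD mS) !(multilinearZ mS) [upd _ b (y b)]upd_id ?upd_other 1?eq_sym //.
rewrite norming_upd upd_comm // (multilinearD mS) !(multilinearZ mS).
(* the remaining cross term is S at y with slots a and b swapped *)
rewrite [upd _ a (y a)]upd_id ?upd_other // norming_upd upd_swap sS Sy.
rewrite -(ip_norm hip) /w (ipDl hip) !(ipDr hip) !(ipZl hip) !(ipZr hip).
by rewrite !(ip_norm hip) !y_unit (ipC hip (y b)); ring.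
Qed.

End NormingPoint.

Section Transfer.
Context {R : zmodType} {k : nat}.
Implicit Types (th : 'I_k -> R) (a b i : 'I_k) (s : R).

Definition transfer th a b s : 'I_k -> R := upd (upd th a (th a + s)) b (th b - s).

Lemma transfer_src th a b s : a != b -> transfer th a b s a = th a + s.
Proof. by move=> ab; rewrite /transfer upd_other ?upd_at. Qed.

Lemma transfer_dst th a b s : transfer th a b s b = th b - s.
Proof. exact: upd_at. Qed.

Lemma transfer_other th a b s i : i != a -> i != b -> transfer th a b s i = th i.
Proof. by move=> ia ib; rewrite /transfer !upd_other. Qed.

Lemma sum_transfer th a b s : a != b -> \sum_i transfer th a b s i = \sum_i th i.
Proof.
move=> ab; have sum_a := sum_upd th a (th a + s).
have sum_b : \sum_i transfer th a b s i + th b = \sum_i upd th a (th a + s) i + (th b - s).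
  by rewrite -[RHS](sum_upd _ b) upd_other // eq_sym.
apply: (addIr (th a + th b)); rewrite addrCA sum_b addrCA addrA sum_a.
by rewrite -!addrA [s + _]addrC subrK.
Qed.

End Transfer.

Lemma neq_of_sinB_neq0 {R : realType} {k : nat} {th : 'I_k -> R} {a b : 'I_k} :
  sin (th b - th a) != 0 -> a != b.
Proof. by apply: contraNneq => ->; rewrite subrr sin0. Qed.

Lemma sin_neq0_of_double {R : realType} (x : R) : sin (x *+ 2) != 0 -> sin x != 0.
Proof. by apply: contraNneq => sin0; rewrite sin_mulr2n sin0 mulr0 mul0rn. Qed.

Definition norming_angles {R : realType} {H : normedModType R} {k : nat}
  (S : ('I_k -> H) -> R) (e f : H) (th : 'I_k -> R) : Prop := S (cis e f \o th) = 1.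

Section Rotation.
Context {R : realType} {H : normedModType R} {ip : H -> H -> R} {k : nat}.
Context {S : ('I_k -> H) -> R}.
Hypotheses (hip : is_inner_product ip) (mS : multilinear S).
Hypotheses (sS : Defs.symmetric_form S) (bS : unit_bounded S).
Context {e f : H}.
Hypothesis hef : orthonormal_pair ip e f.
Local Notation norming_angles := (norming_angles S e f).

Lemma norming_transfer th a b s : norming_angles th -> sin (th b - th a) != 0 ->
  norming_angles (transfer th a b s).
Proof.
move=> Nth Dab; have ab := neq_of_sinB_neq0 Dab.
(* cis (th a + s) and cis (th b - s) are the same combination of y a and y b
   with the roles of a and b exchanged: the shape handled by norming_upd2. *)
set y := cis e f \o th; set D := th b - th a.
have y_unit i : `|y i| = 1 := norm_cis hip hef (th i).
have e_a : cis e f (th a + s) = (sin (D - s) / sin D) *: y a + (sin s / sin D) *: y b.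
  by rewrite (cis_interp _ _ _ Dab) subrKC.
have e_b : cis e f (th b - s) = (sin (D - s) / sin D) *: y b + (sin s / sin D) *: y a.
  have D'0 : sin (- D) != 0 by rewrite sinN oppr_eq0.
  by rewrite (cis_interp _ _ _ D'0) -opprD !sinN invrN !mulrNN /D opprB subrKC.
rewrite /norming_angles /transfer !comp_upd -/y e_a e_b.
by rewrite (norming_upd2 hip mS bS y_unit Nth sS) // -e_a (norm_cis hip hef) expr1n.
Qed.

Lemma norming_step {th l a j} t : norming_angles th -> sin (th l - th a) != 0 ->
  j != a -> j != l ->
  exists phi, [/\ norming_angles phi, \sum_i phi i = \sum_i th i,
    sin (phi l - phi a) != 0, phi j = t &
    forall i, i != a -> i != j -> i != l -> phi i = th i].
Proof.
move=> Nth Dla ja jl; have al := neq_of_sinB_neq0 Dla.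
(* A preliminary transfer between a and l by -v/2 makes l and j non-parallel
   before j is moved, and keeps l and a non-parallel afterwards. *)
have [v [v1 v2]] := exists_sin2_neq0 ((th l - th j) *+ 2) (th l - th a + th j - t).
set phi1 := transfer th a l (- (v / 2)).
have phi1_a : phi1 a = th a - v / 2 by rewrite /phi1 transfer_src.
have phi1_l : phi1 l = th l + v / 2 by rewrite /phi1 transfer_dst opprK.
have phi1_j : phi1 j = th j by rewrite /phi1 transfer_other.
have D1 : sin (phi1 l - phi1 j) != 0.
  rewrite phi1_l phi1_j; apply: sin_neq0_of_double.
  by rewrite (_ : _ *+ 2 = (th l - th j) *+ 2 + v) // !mulr2n; field.
exists (transfer phi1 j l (t - th j)); split.
- by rewrite -phi1_j; apply: norming_transfer D1; apply: norming_transfer.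
- by rewrite !sum_transfer.
- have aj : a != j by rewrite eq_sym.
  rewrite transfer_dst transfer_other // phi1_l phi1_a.
  by rewrite (_ : _ - _ = th l - th a + th j - t + v) //; field.
- by rewrite transfer_src // phi1_j subrKC.
- by move=> i ia ij il; rewrite transfer_other // /phi1 transfer_other.
Qed.

Lemma norming_reach {th l a} psi : norming_angles th -> sin (th l - th a) != 0 ->
  exists phi, [/\ norming_angles phi, \sum_i phi i = \sum_i th i &
    forall i, i != l -> phi i = psi i].
Proof.
move=> Nth Dla; have al := neq_of_sinB_neq0 Dla.
have reach_on (js : seq 'I_k) : exists phi, [/\ norming_angles phi,
    \sum_i phi i = \sum_i th i, sin (phi l - phi a) != 0 &
    forall i, i \in js -> i != a -> i != l -> phi i = psi i].
  elim: js => [|j js [phi [Nphi Sphi Dphi Pphi]]]; first by exists th.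
  have [/andP[ja jl] | j_al] := boolP ((j != a) && (j != l)); last first.
    exists phi; split => // i; rewrite inE => /orP[/eqP ij ia il | ]; last exact: Pphi.
    by move: j_al; rewrite -ij ia il.
  have [phi' [N' S' D' Pj' P']] := norming_step (psi j) Nphi Dphi ja jl.
  exists phi'; split => //; first by rewrite S'.
  move=> i; rewrite inE => /orP[/eqP -> // | ijs ia il].
  have [-> // | ij] := eqVneq i j; rewrite P' //; exact: Pphi.
have [phi [Nphi Sphi Dphi Pphi]] := reach_on (enum 'I_k).
exists (transfer phi a l (psi a - phi a)); split.
- exact: norming_transfer.
- by rewrite sum_transfer.
- move=> i il; have [-> | ia] := eqVneq i a; first by rewrite transfer_src // subrKC.
  by rewrite transfer_other // Pphi ?mem_enum.
Qed.

Lemma norming_cis_sum {th l a} : norming_angles th -> sin (th l - th a) != 0 ->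
  forall phi, S (cis e f \o phi) = cos (\sum_i phi i - \sum_i th i).
Proof.
move=> Nth Dla phi; have [phi0 [N0 S0 P0]] := norming_reach phi Nth Dla.
have phi_upd : phi = upd phi0 l (phi l).
  by apply: funext => i; rewrite /upd; case: eqP => [-> // | /eqP /P0 ->].
have cis0_unit i : `|(cis e f \o phi0) i| = 1 := norm_cis hip hef (phi0 i).
rewrite phi_upd comp_upd (norming_upd hip mS bS cis0_unit N0) (ip_cis hip hef).
have := sum_upd phi0 l (phi l); rewrite -phi_upd S0 => sum_eq.
by rewrite -cosN opprB; congr cos; lra.
Qed.

End Rotation.

Lemma mem_span_fam {R : realType} {H : normedModType R} {k : nat} (x : 'I_k -> H) i :
  span_fam x (x i).
Proof.
exists (fun j => (j == i)%:R); rewrite (bigD1 i) //= eqxx scale1r big1 ?addr0 //.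
by move=> j /negbTE ->; rewrite scale0r.
Qed.

Lemma exists_sinB_neq0 {R : realType} {H : normedModType R} {k : nat} {e f : H}
  {th : 'I_k -> R} l : dim_eq2 (span_fam (cis e f \o th)) ->
  exists a, sin (th l - th a) != 0.
Proof.
move=> hdim; apply: contrapT => none.
apply: (dim_eq2_not_line (cis e f (th l)) hdim) => _ [c ->].
exists (\sum_i c i * cos (th i - th l)); rewrite scaler_suml; apply: eq_bigr => i _.
have sin0 : sin (th i - th l) = 0.
  apply/eqP; rewrite -opprB sinN oppr_eq0; apply/negPn/negP => Dli; apply: none; by exists i.
by rewrite -scalerA -(cis_parallel _ _ sin0) subrKC.
Qed.

Theorem lemma1p6 (R : realType) (H : completeNormedModType R)
  (ip : H -> H -> R) (hip : is_inner_product ip)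
  (k : nat) (hk : (2 <= k)%N) (x : 'I_k -> H)
  (hx : forall i, `|x i| = 1)
  (hdim : dim_eq2 (span_fam x))
  (S T : ('I_k -> H) -> R) (hS : Ls S) (hT : Ls T)
  (nS : form_norm S = 1) (nT : form_norm T = 1)
  (Sx : S x = 1) (Tx : T x = 1) :
  forall w : 'I_k -> H, (forall i, span_fam x (w i)) -> S w = T w.
Proof.
have [[mS sS _] [mT sT _]] := (hS, hT).
have [bS bT] := (form_norm1_unit_bounded hS nS, form_norm1_unit_bounded hT nT).
have [u [v [indep span_uv]]] := hdim.
have [e [f [hef uv_ef]]] := gram_schmidt2 hip indep.
have polar_span w : span_fam x w -> exists r t, 0 <= r /\ w = r *: cis e f t.
  by rewrite span_uv => -[a [b ->]]; have [c [d ->]] := uv_ef a b; exact: comb_polar.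
have /choice[th x_th] : forall i, exists t, x i = cis e f t.
  move=> i; have [r [t [r_ge0 xi]]] := polar_span _ (mem_span_fam x i).
  exists t; move: (hx i); rewrite xi normrZ (norm_cis hip hef) mulr1 ger0_norm //.
  by move=> ->; rewrite scale1r.
have {}x_th : x = cis e f \o th by apply: funext.
rewrite x_th in hdim Sx Tx; have [a Dla] := exists_sinB_neq0 (Ordinal hk) hdim.
move=> w w_span.
have /choice[rt w_rt] : forall i, exists rt : R * R, w i = rt.1 *: cis e f rt.2.
  by move=> i; have [r [t [_ ->]]] := polar_span _ (w_span i); exists (r, t).
have -> : w = fun i => (rt i).1 *: (cis e f \o (fun i => (rt i).2)) i by apply: funext.
rewrite !multilinear_scale //.
by rewrite (norming_cis_sum hip mS sS bS hef Sx Dla) (norming_cis_sum hip mT sT bT hef Tx Dla).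
Qed.
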